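(* Let $G$ be a bipartite graph with $\mathrm{Ind}(G)$ Cohen-Macaulay, let $X=\{x_1,\ldots,x_n\}$, $Y=\{y_1,\ldots,y_n\}$, $Z=\{z_1,\ldots,z_m\}$ be any tri-partition of its vertices as below, and let $\check G$ be the corresponding compression. Then $h_j(\mathrm{Ind}(G))=f_{j-1}(\mathrm{Ind}(\check G))$ for all $0\le j\le n+m$, where $f_{j-1}(\mathrm{Ind}(\check G))$ denotes the number of independent sets of size $j$ in $\check G$ (zero if $j>n$).
   Context: $\mathrm{Ind}(G)$ is the simplicial complex of independent sets of $G$. If $G$ is bipartite and $\mathrm{Ind}(G)$ is Cohen-Macaulay, there is a tri-partition $X=\{x_1,\ldots,x_n\}$, $Y=\{y_1,\ldots,y_n\}$, $Z=\{z_1,\ldots,z_m\}$ of its vertices with: (1) $Z$ is exactly the set of isolated vertices; (2) $X$, $Y$ are independent, $x_iy_i$ is an edge for all $i$, and whenever $x_iy_j$, $x_jy_k$ are edges with $i,j,k$ distinct, $x_iy_k$ is an edge; (3) $x_iy_j$ an edge implies $i\le j$. The compression of $G$ (with respect to such a tri-partition) is the graph $\check G$ with vertex set $X$ and edge set $\{x_ix_j : i<j,\ x_iy_j \text{ is an edge of } G\}$. For a $(d-1)$-dimensional complex with face numbers $f_{i-1}$ (number of faces with $i$ elements), the $h$-vector is $h_j=\sum_{i=0}^{j}(-1)^{j-i}\binom{d-i}{j-i}f_{i-1}$, $0\le j\le d$; here $d=n+m$. *)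

From HB Require Import structures.
From mathcomp Require Import all_boot all_order all_algebra.
Set Implicit Arguments. Unset Strict Implicit. Unset Printing Implicit Defensive.
Import Order.TTheory GRing.Theory Num.Theory.

Section Defs.
Variable V : finType.

Definition indep (e : rel V) (S : {set V}) : bool :=
  [forall u in S, forall v in S, ~~ e u v].

Definition Ind (e : rel V) : {set {set V}} := [set S | indep e S].

Definition faces (K : {set {set V}}) (k : nat) : {set {set V}} :=
  [set s in K | #|s| == k].

(* f_{k-1}(K) = number of faces with k elements *)
Definition fnum (K : {set {set V}}) (k : nat) : nat := #|faces K k|.

(* h-vector entry h_j for a complex with d = dim + 1 :
   h_j = sum_{i=0}^{j} (-1)^(j-i) C(d-i, j-i) f_{i-1} *)
Definition hvec (d : nat) (K : {set {set V}}) (j : nat) : int :=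
  (\sum_(i < j.+1) (-1) ^+ (j - i) * ('C(d - i, j - i))%:Z * (fnum K i)%:Z)%R.

(* simplicial boundary matrix from the faces with k+1 elements to the faces
   with k elements (vertices ordered by enum_rank); includes the augmentation
   (k = 0), so it computes reduced homology *)
Definition bdry (F : fieldType) (K : {set {set V}}) (k : nat)
  : 'M[F]_(#|faces K k.+1|, #|faces K k|) :=
  \matrix_(a < #|faces K k.+1|, b < #|faces K k|)
    (let s : {set V} := enum_val a in let t : {set V} := enum_val b in
     if t \subset s then
       \sum_(v in s :\: t) (-1) ^+ #|[set u in s | (enum_rank u < enum_rank v)%N]|
     else 0)%R.

(* dimension over F of the reduced homology group in dimension k-1
   (i.e. built on the faces with k elements) *)
Definition rbetti (F : fieldType) (K : {set {set V}}) (k : nat) : nat :=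
  (#|faces K k| - (if k is k'.+1 then \rank (bdry F K k') else 0)
     - \rank (bdry F K k))%N.

Definition link (K : {set {set V}}) (s : {set V}) : {set {set V}} :=
  [set t in K | [disjoint t & s] && (t :|: s \in K)].

(* dim K + 1 = largest number of elements of a face *)
Definition maxsize (K : {set {set V}}) : nat := \max_(t in K) #|t|.

(* Cohen-Macaulay over F, via Reisner's criterion: for every face s and every
   i < dim lk s, reduced homology H~_i(lk s; F) vanishes. *)
Definition CohenMacaulay (F : fieldType) (K : {set {set V}}) : Prop :=
  forall s, s \in K -> forall k, (k < maxsize (link K s))%N ->
    rbetti F (link K s) k = 0%N.

End Defs.

Definition simple_graph (V : finType) (e : rel V) : Prop :=
  symmetric e /\ irreflexive e.

Definition bipartite (V : finType) (e : rel V) : Prop :=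
  exists c : V -> bool, forall u v, e u v -> c u != c v.

(* x : 'I_n -> V, y : 'I_n -> V, z : 'I_m -> V form a tri-partition of V
   satisfying (1)-(3); indices are 0-based. *)
Definition good_tripartition (V : finType) (e : rel V) (n m : nat)
  (x y : 'I_n -> V) (z : 'I_m -> V) : Prop :=
  (injective x /\ injective y /\ injective z /\
   (forall i j, x i <> y j) /\ (forall i k, x i <> z k) /\
   (forall j k, y j <> z k) /\
   forall v, (exists i, v = x i) \/ (exists i, v = y i) \/ (exists k, v = z k))
  /\
  (forall v, (exists k, v = z k) <-> (forall w, ~~ e v w))
  /\
  [/\ (forall i j, ~~ e (x i) (x j)), (forall i j, ~~ e (y i) (y j)),
      (forall i, e (x i) (y i))
    & forall i j k, i != j -> j != k -> i != k ->
        e (x i) (y j) -> e (x j) (y k) -> e (x i) (y k)]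
  /\
  (forall i j, e (x i) (y j) -> (i <= j)%N).

(* compression: vertex set X (indexed by 'I_n), edge x_i x_j (i<j) iff x_i y_j in G *)
Definition compression (V : finType) (e : rel V) (n : nat) (x y : 'I_n -> V)
  : rel 'I_n :=
  fun i j => ((i < j)%N && e (x i) (y j)) || ((j < i)%N && e (x j) (y i)).

(* Put i <| j when x_i y_j is an edge.  Conditions (2) and (3) make <| a partial
   order on the indices refining the natural order, and the independent sets of
   the compression G' are exactly its antichains.  An independent set S of G is
   encoded by the antichain M of the maximal indices j with y_j in S, together
   with the set R of the remaining vertices, all moved to the X or Z side: x_i for
   x_i in S and for non-maximal y_i in S (there is no clash, as x_i y_i is an
   edge), plus S :&: Z.  This is a bijection onto the pairs (M, R) with R a subset
   of x(~M) :|: Z, so f_{i-1}(Ind G) = sum_k f_{k-1}(Ind G') 'C(n+m-k, i-k), and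
   inverting this binomial transform gives h_j(Ind G) = f_{j-1}(Ind G').
   Bipartiteness and the Cohen-Macaulay property only guarantee that the
   tri-partition exists. *)

From HB Require Import structures.
From mathcomp Require Import all_boot all_order all_algebra ring zify.
Set Implicit Arguments. Unset Strict Implicit. Unset Printing Implicit Defensive.
Import GRing.Theory.

Lemma bin_mul_trinomial a b c :
  'C(b + c, b) * 'C(a + b + c, a) = 'C(a + b + c, a + b) * 'C(a + b, a).
Proof.
have bin_factE p q : 'C(p + q, p) * (p`! * q`!) = (p + q)`!.
  by rewrite -{2}(addKn p q) bin_fact // leq_addr.
apply/eqP; rewrite -(@eqn_pmul2r (a`! * b`! * c`!)) ?muln_gt0 ?fact_gt0 //; apply/eqP.
have E1 := bin_factE b c; have E2 := bin_factE a (b + c).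
have E3 := bin_factE a b; have E4 := bin_factE (a + b) c.
rewrite addnA in E2.
transitivity (a + b + c)`!; [rewrite -E2 -E1 | rewrite -E4 -E3]; ring.
Qed.

Section BinomialInversion.
Local Open Scope ring_scope.

Lemma sum_alternating_binomial (R : pzRingType) k j : (k <= j)%N ->
  \sum_(k <= i < j.+1) (-1) ^+ (j - i) *+ 'C(j - k, i - k) = (j == k)%:R :> R.
Proof.
move=> kj; rewrite -{1}(add0n k) big_addn subSn // big_mkord.
have -> : (j == k) = (j - k == 0)%N by rewrite subn_eq0 eqn_leq kj andbT.
rewrite -expr0n -[0 in RHS](addNr 1) (exprDn_comm _ (commr1 _)); apply: eq_bigr => i _.
by rewrite expr1n mulr1 addnK addnC subnDA.
Qed.

Lemma binomial_inversion (R : pzRingType) (d : nat) (c f : nat -> R) :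
  (forall i, f i = \sum_(k < i.+1) c k *+ 'C(d - k, i - k)) ->
  forall j, (j <= d)%N ->
  \sum_(i < j.+1) (-1) ^+ (j - i) *+ 'C(d - i, j - i) * f i = c j.
Proof.
move=> fE j jd.
transitivity (\sum_(k < j.+1) c k *+ 'C(d - k, j - k) *
                \sum_(k <= i < j.+1) (-1) ^+ (j - i) *+ 'C(j - k, i - k)).
  rewrite (eq_bigr (fun i : 'I_j.+1 => \sum_(k < j.+1 | (k < i.+1)%N)
      (-1) ^+ (j - i) *+ 'C(d - i, j - i) * (c k *+ 'C(d - k, i - k)))); last first.
    move=> i _; rewrite fE mulr_sumr.
    by rewrite (big_ord_widen j.+1 (fun k => _ * (c k *+ 'C(d - k, i - k)))).
  rewrite (exchange_big_dep xpredT) //=; apply: eq_bigr => k _.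
  rewrite big_geq_mkord mulr_sumr; apply: eq_big => // i /= ki.
  have ij : (i <= j)%N by rewrite -ltnS.
  have trinomial : ('C(d - i, j - i) * 'C(d - k, i - k) =
                    'C(d - k, j - k) * 'C(j - k, i - k))%N.
    have := bin_mul_trinomial (i - k) (j - i) (d - j).
    have -> : (j - i + (d - j) = d - i)%N by lia.
    have -> : (i - k + (j - i) = j - k)%N by lia.
    by have -> : (j - k + (d - j) = d - k)%N by lia.
  rewrite !(mulrnAl, mulrnAr) -!mulrnA commr_sign.
  by rewrite mulnC trinomial mulnC.
rewrite (bigD1 ord_max) //= [X in _ + X]big1 ?addr0; last first.
  move=> k; rewrite -val_eqE /= => k_ne_j.
  by rewrite sum_alternating_binomial ?leq_ord // eq_sym (negbTE k_ne_j) mulr0.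
by rewrite sum_alternating_binomial // eqxx subnn bin0 mulr1.
Qed.

End BinomialInversion.

HB.lock Definition downset (T : finType) (prec : rel T) (M : {set T}) :=
  [set i | [exists j in M, prec i j]].

HB.lock Definition maximals (T : finType) (prec : rel T) (B : {set T}) :=
  [set j in B | [forall k in B, prec j k ==> (k == j)]].

Definition antichain (T : finType) (prec : rel T) (M : {set T}) :=
  [forall u in M, forall v in M, prec u v ==> (u == v)].

Section NaturallyLabelledPoset.
Variables (n : nat) (prec : rel 'I_n).
Hypotheses (prec_refl : reflexive prec) (prec_trans : transitive prec).
Hypothesis prec_leq : forall i j, prec i j -> i <= j.

Lemma prec_anti i j : prec i j -> prec j i -> i = j.
Proof. by move=> /prec_leq ij /prec_leq ji; apply/val_inj/eqP; rewrite eqn_leq ij ji. Qed.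

Local Notation downset := (downset prec).
Local Notation maximals := (maximals prec).
Local Notation antichain := (antichain prec).

Lemma in_downset (M : {set 'I_n}) i : (i \in downset M) = [exists j in M, prec i j].
Proof. by rewrite downset.unlock inE. Qed.

Lemma in_maximals (B : {set 'I_n}) j :
  (j \in maximals B) = (j \in B) && [forall k in B, prec j k ==> (k == j)].
Proof. by rewrite maximals.unlock inE. Qed.

Lemma maximals_sub (B : {set 'I_n}) : maximals B \subset B.
Proof. by apply/subsetP => j; rewrite in_maximals => /andP[]. Qed.

Lemma sub_downset (M : {set 'I_n}) : M \subset downset M.
Proof.
by apply/subsetP => j jM; rewrite in_downset; apply/existsP; exists j; rewrite jM prec_refl.
Qed.

(* An element of [B] above [i] with the largest label is maximal, by [prec_leq]. *)
Lemma sub_downset_maximals (B : {set 'I_n}) : B \subset downset (maximals B).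
Proof.
apply/subsetP => i iB.
have Pi : (i \in B) && prec i i by rewrite iB prec_refl.
case: (@arg_maxnP _ i (fun k => (k \in B) && prec i k) val Pi) => k /andP[kB ik] kmax.
rewrite in_downset; apply/existsP; exists k; rewrite ik andbT in_maximals kB /=.
apply/forallP => j; apply/implyP => jB; apply/implyP => kj.
have := kmax j; rewrite jB (prec_trans ik kj) => /(_ isT) jk.
by apply/eqP/val_inj/eqP; rewrite eqn_leq (prec_leq kj) andbT.
Qed.

Lemma antichain_maximals (B : {set 'I_n}) : antichain (maximals B).
Proof.
apply/forallP => u; apply/implyP => uM; apply/forallP => v; apply/implyP => vM.
apply/implyP => uv; move: uM; rewrite in_maximals => /andP[_ /forallP/(_ v)].
by rewrite (subsetP (maximals_sub B) v vM) /= eq_sym => /implyP/(_ uv).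
Qed.

Lemma maximals_id (M B : {set 'I_n}) :
  antichain M -> M \subset B -> B \subset downset M -> maximals B = M.
Proof.
move=> /forallP antiM /subsetP MB /subsetP BM; apply/setP => j.
rewrite in_maximals; apply/idP/idP.
  case/andP => jB /forallP jmax; move/BM: jB; rewrite in_downset.
  case/existsP => k /andP[kM jk].
  by move: (jmax k); rewrite (MB _ kM) jk /= => /eqP <-.
move=> jM; rewrite MB //=; apply/forallP => k; apply/implyP => kB; apply/implyP => jk.
move/BM: kB; rewrite in_downset => /existsP[k' /andP[k'M kk']].
have /eqP jk' :=
  implyP (implyP (forallP (implyP (antiM j) jM) k') k'M) (prec_trans jk kk').
by subst k'; apply/eqP/prec_anti.
Qed.

End NaturallyLabelledPoset.

Lemma cardsU_setI0 (T : finType) (A B : {set T}) :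
  A :&: B = set0 -> #|A :|: B| = #|A| + #|B|.
Proof. by move=> AB; rewrite cardsU AB cards0 subn0. Qed.

Lemma sum_faces_by_size (T : finType) (K : {set {set T}}) (g : nat -> nat) i :
  \sum_(s in K | #|s| <= i) g #|s| = \sum_(k < i.+1) fnum K k * g k.
Proof.
rewrite (partition_big (fun s : {set T} => inord #|s| : 'I_i.+1) xpredT) //=.
apply: eq_bigr => k _; rewrite -sum_nat_const; apply: eq_big => [s|s].
  rewrite !inE -andbA; case: (s \in K) => //=.
  case: leqP => si /=; first by rewrite -val_eqE /= inordK.
  by rewrite eq_sym ltn_eqF // (leq_trans (ltn_ord k)).
by case/andP=> /andP[_ si] /eqP <-; rewrite inordK.
Qed.

Section Compression.
Variables (V : finType) (e : rel V) (n m : nat).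
Variables (x y : 'I_n -> V) (z : 'I_m -> V).
Hypothesis e_sym : symmetric e.
Hypotheses (x_inj : injective x) (y_inj : injective y) (z_inj : injective z).
Hypotheses (x_neq_y : forall i j, x i <> y j) (x_neq_z : forall i k, x i <> z k).
Hypothesis y_neq_z : forall j k, y j <> z k.
Hypothesis vertex_cover :
  forall v, (exists i, v = x i) \/ (exists i, v = y i) \/ (exists k, v = z k).
Hypothesis z_isolated : forall k w, ~~ e (z k) w.
Hypothesis x_indep : forall i j, ~~ e (x i) (x j).
Hypothesis y_indep : forall i j, ~~ e (y i) (y j).
Hypothesis xy_diag : forall i, e (x i) (y i).
Hypothesis xy_trans : forall i j k, i != j -> j != k -> i != k ->
  e (x i) (y j) -> e (x j) (y k) -> e (x i) (y k).
Hypothesis xy_upper : forall i j, e (x i) (y j) -> i <= j.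

Variant vertex_spec : V -> Prop :=
  | VertexX i : vertex_spec (x i)
  | VertexY i : vertex_spec (y i)
  | VertexZ k : vertex_spec (z k).

Lemma vertexP v : vertex_spec v.
Proof. by have [[i ->]|[[i ->]|[k ->]]] := vertex_cover v; constructor. Qed.

Definition prec i j := e (x i) (y j).

Lemma prec_refl : reflexive prec. Proof. exact: xy_diag. Qed.

Lemma prec_trans : transitive prec.
Proof.
move=> j i k ij jk.
have [-> //|ne_ij] := eqVneq i j; have [<- //|ne_jk] := eqVneq j k.
have [-> |ne_ik] := eqVneq i k; first exact: prec_refl.
exact: xy_trans ij jk.
Qed.

Local Notation antichain := (antichain prec).
Local Notation downset := (downset prec).
Local Notation maximals := (maximals prec).

Definition isolated := [set z k | k : 'I_m].
Definition free_part (M : {set 'I_n}) := x @: (~: M) :|: isolated.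
Definition xpart (S : {set V}) := [set i | x i \in S].
Definition ypart (S : {set V}) := [set i | y i \in S].

Lemma mem_ximage i (A : {set 'I_n}) : (x i \in x @: A) = (i \in A).
Proof. exact: mem_imset. Qed.
Lemma mem_yimage i (A : {set 'I_n}) : (y i \in y @: A) = (i \in A).
Proof. exact: mem_imset. Qed.
Lemma x_notin_yimage i (A : {set 'I_n}) : (x i \in y @: A) = false.
Proof. by apply/imsetP => -[j _ /x_neq_y]. Qed.
Lemma y_notin_ximage i (A : {set 'I_n}) : (y i \in x @: A) = false.
Proof. by apply/imsetP => -[j _ /esym/x_neq_y]. Qed.
Lemma z_notin_ximage k (A : {set 'I_n}) : (z k \in x @: A) = false.
Proof. by apply/imsetP => -[j _ /esym/x_neq_z]. Qed.
Lemma z_notin_yimage k (A : {set 'I_n}) : (z k \in y @: A) = false.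
Proof. by apply/imsetP => -[j _ /esym/y_neq_z]. Qed.
Lemma x_notin_isolated i : (x i \in isolated) = false.
Proof. by apply/imsetP => -[k _ /x_neq_z]. Qed.
Lemma y_notin_isolated i : (y i \in isolated) = false.
Proof. by apply/imsetP => -[k _ /y_neq_z]. Qed.
Lemma z_in_isolated k : z k \in isolated.
Proof. exact: imset_f. Qed.

Definition vertex_set (A B : {set 'I_n}) (R : {set V}) :=
  x @: A :|: y @: B :|: (R :&: isolated).

Lemma mem_vertex_set (A B : {set 'I_n}) (R : {set V}) v : (v \in vertex_set A B R) =
  [|| v \in x @: A, v \in y @: B | (v \in R) && (v \in isolated)].
Proof. by rewrite !inE orbA. Qed.

Definition vertexE := (mem_vertex_set, inE, mem_ximage, mem_yimage,
  x_notin_yimage, y_notin_ximage, z_notin_ximage, z_notin_yimage,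
  x_notin_isolated, y_notin_isolated, z_in_isolated,
  orbF, orFb, andbF, andFb, andbT, andTb).

Lemma vertex_set_part (S : {set V}) : S = vertex_set (xpart S) (ypart S) S.
Proof. by apply/setP => v; case: (vertexP v) => *; rewrite ?vertexE. Qed.

Lemma card_vertex_set (A B : {set 'I_n}) (R : {set V}) :
  #|vertex_set A B R| = #|A| + #|B| + #|R :&: isolated|.
Proof.
rewrite /vertex_set !cardsU_setI0 ?card_imset //;
  by apply/setP => v; case: (vertexP v) => *; rewrite ?vertexE.
Qed.

Lemma card_free_part (M : {set 'I_n}) : #|free_part M| = n + m - #|M|.
Proof.
rewrite cardsU_setI0; last by apply/setP => v; case: (vertexP v) => *; rewrite ?vertexE.
rewrite !card_imset // [#|'I_m|]card_ord.
have cardM : #|M| + #|~: M| = n by rewrite cardsC card_ord.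
by rewrite -[X in X + m - _]cardM -addnA addKn.
Qed.

Lemma indep_not_prec (S : {set V}) a b :
  indep e S -> x a \in S -> y b \in S -> ~~ prec a b.
Proof.
move=> /forallP/(_ (x a))/implyP Sx xa yb.
by move: (forallP (Sx xa) (y b)) => /implyP; apply.
Qed.

Lemma indep_vertex_set (A B : {set 'I_n}) (R : {set V}) :
  (forall a b, a \in A -> b \in B -> ~~ prec a b) -> indep e (vertex_set A B R).
Proof.
move=> AB; apply/forallP => u; apply/implyP => uS; apply/forallP => v; apply/implyP => vS.
case: (vertexP u) uS => [i|i|k] uS; case: (vertexP v) vS => [j|j|l] vS;
  rewrite ?(z_isolated, e_sym _ (z _), x_indep, y_indep) //.
  by move: uS vS; rewrite ?vertexE; exact: AB.
by move: uS vS; rewrite ?vertexE e_sym => iB jA; exact: AB.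
Qed.

Definition encode (S : {set V}) : {set 'I_n} * {set V} :=
  (maximals (ypart S),
   vertex_set (xpart S :|: (ypart S :\: maximals (ypart S))) set0 S).

Definition decode (p : {set 'I_n} * {set V}) : {set V} :=
  vertex_set (xpart p.2 :\: downset p.1) (p.1 :|: (xpart p.2 :&: downset p.1)) p.2.

Lemma indep_xy_diag (S : {set V}) i : indep e S -> x i \in S -> y i \in S -> False.
Proof. by move=> Sind xi yi; have := indep_not_prec Sind xi yi; rewrite /prec xy_diag. Qed.

Lemma indep_notin_downset (S : {set V}) i :
  indep e S -> x i \in S -> i \notin downset (maximals (ypart S)).
Proof.
move=> Sind xi; rewrite in_downset; apply/existsP => -[j /andP[jM ij]].
have := subsetP (maximals_sub prec (ypart S)) j jM; rewrite inE => yj.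
by have := indep_not_prec Sind xi yj; rewrite ij.
Qed.

Lemma decode_encode (S : {set V}) : indep e S -> decode (encode S) = S.
Proof.
move=> Sind; apply/setP => v; rewrite /decode /encode /=.
have ypart_down := subsetP (sub_downset_maximals prec_refl prec_trans xy_upper (ypart S)).
case: (vertexP v) => [i|i|k]; rewrite ?vertexE //.
- case xi: (x i \in S) => /=.
    by rewrite andbT; apply: (indep_notin_downset Sind xi).
  apply/negP => /andP[iD /andP[_ yi]].
  by move: iD; rewrite ypart_down // inE.
- case: (boolP (i \in maximals _)) => [iM|notM] /=.
    by have := subsetP (maximals_sub prec (ypart S)) i iM; rewrite inE => ->.
  case yi: (y i \in S); rewrite /= ?orbT ?orbF.
    by apply: ypart_down; rewrite inE.
  by apply/negP => /andP[xi]; apply/negP/(indep_notin_downset Sind xi).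
Qed.

Lemma encode_free (S : {set V}) :
  indep e S -> (encode S).2 \subset free_part (encode S).1.
Proof.
move=> Sind; apply/subsetP => v; rewrite /encode /free_part /=.
case: (vertexP v) => [i|i|k]; rewrite ?vertexE //.
case/orP => [xi|/andP[] //]; apply/negP => /(subsetP (maximals_sub prec _)).
by rewrite inE; apply: indep_xy_diag Sind xi.
Qed.

Lemma card_encode (S : {set V}) :
  indep e S -> #|(encode S).1| + #|(encode S).2| = #|S|.
Proof.
move=> Sind; rewrite [in RHS](vertex_set_part S) !card_vertex_set cards0 addn0 /=.
rewrite cardsU_setI0; last first.
  apply/setP => i; rewrite !inE; apply/negP => /andP[xi /andP[_ yi]].
  exact: indep_xy_diag Sind xi yi.
rewrite -[#|ypart S|](cardsID (maximals (ypart S))).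
by rewrite (setIidPr (maximals_sub prec _)); ring.
Qed.

Lemma indep_decode p : indep e (decode p).
Proof.
case: p => M R; apply: indep_vertex_set => a b; rewrite !inE => /andP[aD _] bB.
have bD : b \in downset M.
  by case/orP: bB => [/(subsetP (sub_downset prec_refl M)) | /andP[_ ->]].
apply: contra aD => ab; move: bD; rewrite !in_downset => /existsP[j /andP[jM bj]].
by apply/existsP; exists j; rewrite jM (prec_trans ab bj).
Qed.

Lemma free_part_notin (M : {set 'I_n}) (R : {set V}) i :
  R \subset free_part M -> x i \in R -> i \notin M.
Proof. by move=> /subsetP RM /RM; rewrite ?vertexE. Qed.

Lemma free_part_vertex_set (M : {set 'I_n}) (R : {set V}) :
  R \subset free_part M -> R = vertex_set (xpart R) set0 R.
Proof.
move=> /subsetP RM; apply/setP => v; case: (vertexP v) => [i|i|k]; rewrite ?vertexE //.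
by apply/negP => /RM; rewrite ?vertexE.
Qed.

Lemma card_decode (M : {set 'I_n}) (R : {set V}) :
  R \subset free_part M -> #|decode (M, R)| = #|M| + #|R|.
Proof.
move=> RM; rewrite [in RHS](free_part_vertex_set RM) !card_vertex_set cards0 addn0 /=.
rewrite cardsU_setI0; last first.
  apply/setP => i; rewrite !inE; apply/negP => /andP[iM /andP[xi _]].
  by move: (free_part_notin RM xi); rewrite iM.
rewrite -(cardsID (downset M) (xpart R)); ring.
Qed.

Lemma encode_decode (M : {set 'I_n}) (R : {set V}) :
  antichain M -> R \subset free_part M -> encode (decode (M, R)) = (M, R).
Proof.
move=> antiM RM.
have ypartE : ypart (decode (M, R)) = M :|: (xpart R :&: downset M).
  by apply/setP => i; rewrite /decode /=; rewrite ?vertexE.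
have xpartE : xpart (decode (M, R)) = xpart R :\: downset M.
  by apply/setP => i; rewrite /decode /=; rewrite ?vertexE.
have maxE : maximals (ypart (decode (M, R))) = M.
  rewrite ypartE; apply: (maximals_id prec_trans xy_upper) => //; first exact: subsetUl.
  by rewrite subUset sub_downset ?subsetIr.
rewrite /encode maxE xpartE ypartE; congr pair.
apply/setP => v; rewrite /decode /=; case: (vertexP v) => [i|i|k]; rewrite ?vertexE //.
- case xi: (x i \in R); last by rewrite andbF /= andbC; case: (i \in M).
  by rewrite (negbTE (free_part_notin RM xi)) /=; case: (i \in downset M).
- by rewrite (free_part_vertex_set RM) ?vertexE.
Qed.

Definition decompositions i := [set p : {set 'I_n} * {set V} |
  [&& antichain p.1, p.2 \subset free_part p.1 & #|p.1| + #|p.2| == i]].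

Lemma fnum_Ind_decompositions i : fnum (Ind e) i = #|decompositions i|.
Proof.
have encode_inj : {in faces (Ind e) i &, injective encode}.
  move=> S1 S2; rewrite !inE => /andP[S1ind _] /andP[S2ind _] E.
  by rewrite -(decode_encode S1ind) -(decode_encode S2ind) E.
rewrite /fnum -(card_in_imset encode_inj); apply: eq_card => -[M R].
apply/imsetP/idP.
  case=> S; rewrite !inE => /andP[Sind /eqP <-] ->.
  by rewrite encode_free // card_encode // eqxx andbT antichain_maximals.
rewrite inE /= => /and3P[antiM RM /eqP MR].
exists (decode (M, R)); last by rewrite encode_decode.
by rewrite !inE indep_decode card_decode // MR /=.
Qed.

Lemma card_decompositions i : #|decompositions i| =
  \sum_(M | antichain M && (#|M| <= i)) 'C(n + m - #|M|, i - #|M|).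
Proof.
transitivity (\sum_(M : {set 'I_n}) \sum_(R : {set V}) ((M, R) \in decompositions i : nat)).
  rewrite pair_big /= -sum1_card big_mkcond /=.
  by apply: eq_bigr => -[M R] _; case: (_ \in _).
rewrite [RHS]big_mkcond; apply: eq_bigr => M _.
case: ifP => [/andP[antiM Mi] | PM]; last first.
  apply: big1 => R _; rewrite inE /=; case: and3P => //= -[antiM _ /eqP MR].
  by move: PM; rewrite antiM -MR leq_addr.
rewrite -card_free_part -cards_draws -sum1_card [RHS]big_mkcond /=.
apply: eq_bigr => R _; rewrite !inE /= antiM.
by rewrite -[i in _ == i](subnKC Mi) eqn_add2l /=; case: (_ && _).
Qed.

Lemma compression_prec u v :
  compression e x y u v = (u != v) && (prec u v || prec v u).
Proof.
rewrite /compression -!/(prec _ _).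
case puv: (prec u v); case pvu: (prec v u); rewrite ?andbF ?andbT ?orbF //=.
- by rewrite (prec_anti xy_upper puv pvu) ltnn eqxx.
- by rewrite ltn_neqAle -val_eqE (xy_upper puv) andbT.
- by rewrite ltn_neqAle -val_eqE (xy_upper pvu) andbT eq_sym.
Qed.

Lemma indep_compression (M : {set 'I_n}) : indep (compression e x y) M = antichain M.
Proof.
apply/forall_inP/forall_inP => MP u uM; apply/forall_inP => v vM;
  have := forall_inP (MP u uM) v vM.
  by rewrite compression_prec negb_and negbK; case: (prec u v); rewrite ?orbT ?orbF.
rewrite compression_prec negb_and negbK negb_or => /implyP uv.
have := forall_inP (MP v vM) u uM; rewrite eq_sym => /implyP vu.
have [//|u_ne_v] /= := eqVneq u v.
by rewrite (contraNN uv u_ne_v) (contraNN vu u_ne_v).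
Qed.

Lemma fnum_Ind_compression i : fnum (Ind e) i =
  \sum_(k < i.+1) fnum (Ind (compression e x y)) k * 'C(n + m - k, i - k).
Proof.
rewrite fnum_Ind_decompositions card_decompositions.
rewrite -(sum_faces_by_size _ (fun k => 'C(n + m - k, i - k))).
by apply: eq_bigl => M; rewrite inE indep_compression.
Qed.

End Compression.

Theorem proposition4p11 (F : fieldType) (V : finType) (e : rel V)
  (n m : nat) (x y : 'I_n -> V) (z : 'I_m -> V) :
  simple_graph e -> bipartite e ->
  CohenMacaulay F (Ind e) ->
  good_tripartition e x y z ->
  forall j : nat, (j <= n + m)%N ->
    hvec (n + m) (Ind e) j = ((fnum (Ind (compression e x y)) j)%:Z)%R.
Proof.
move=> [e_sym _] _ _ [[x_inj [y_inj [z_inj [x_neq_y [x_neq_z [y_neq_z vertex_cover]]]]]]].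
move=> [isolatedP [[x_indep y_indep xy_diag xy_trans] xy_upper]] j jd.
have z_isolated k w : ~~ e (z k) w by apply/(isolatedP (z k)).1; exists k.
rewrite /hvec; under eq_bigr => i _ do rewrite -[('C(_, _))%:Z%R]natz mulr_natr.
apply: (binomial_inversion (f := fun i => (fnum (Ind e) i)%:Z%R)
  (c := fun k => (fnum (Ind (compression e x y)) k)%:Z%R)) => // i.
rewrite (fnum_Ind_compression e_sym x_inj y_inj z_inj x_neq_y x_neq_z y_neq_z vertex_cover
  z_isolated x_indep y_indep xy_diag xy_trans xy_upper) -natz natr_sum.
by apply: eq_bigr => k _; rewrite natrM mulr_natr natz.
Qed.
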